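(* In the linear deterministic diamond network with a disturbing node with gains $n_1,n_2,n_3,n_4,m$, suppose $n_1>n_2$, $n_4\ge n_3$ and $m>n_2$. Then the linear capacity is $C=\min(n_1,n_3)$.
   Context: The shift matrix $Q$ is the $q\times q$ matrix over $\mathbb{F}_2$ with $Q_{i+1,i}=1$ for $1\le i\le q-1$ and all other entries $0$, where $q=\max(n_1,n_2,n_3,n_4,m)$ and all gains are nonnegative integers. Network: source $S$, relays $A,B$, destination $D$, disturbing node $M$; gains $n_1$ ($S\to A$), $n_2$ ($S\to B$), $n_3$ ($A\to D$), $n_4$ ($B\to D$), $m$ ($M\to A$ and $M\to B$). Each node transmits $x_i\in\mathbb{F}_2^q$ and receives $y_j=\sum_{k:(k,j)\text{ an edge}}Q^{q-n_{(k,j)}}x_k$; relays use linear maps $x_A=G_Ay_A$, $x_B=G_By_B$ with $G_A,G_B$ arbitrary $q\times q$ matrices over $\mathbb{F}_2$. Then $y_D=G_Sx_S+G_Mx_M$ with $G_S=Q^{q-n_3}G_AQ^{q-n_1}+Q^{q-n_4}G_BQ^{q-n_2}$ and $G_M=Q^{q-n_3}G_AQ^{q-m}+Q^{q-n_4}G_BQ^{q-m}$. The rate $R(G_A,G_B)$ is the maximum dimension of a subspace $\mathcal{X}\subseteq\mathbb{F}_2^q$ such that for all $x_S,x_S'\in\mathcal{X}$, $x_M,x_M'\in\mathbb{F}_2^q$, $G_Sx_S+G_Mx_M=G_Sx_S'+G_Mx_M'$ implies $x_S=x_S'$. The linear capacity is $C=\max_{G_A,G_B}R(G_A,G_B)$.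 *)

(* Vectors are column vectors 'cV_q; a subspace of F_2^q is
   represented by a q x q matrix whose row space is the subspace (mxalgebra),
   a column vector x lying in it iff (x^T <= X)%MS. *)
From HB Require Import structures.
From mathcomp Require Import all_boot all_order all_algebra.
Set Implicit Arguments. Unset Strict Implicit. Unset Printing Implicit Defensive.
Import GRing.Theory.
Local Open Scope ring_scope.

Definition qdim (n1 n2 n3 n4 m : nat) : nat :=
  maxn n1 (maxn n2 (maxn n3 (maxn n4 m))).

Definition shiftQ (q : nat) : 'M['F_2]_q :=
  \matrix_(i < q, j < q) ((i : nat) == (j : nat).+1)%:R.

Definition chan (q n : nat) : 'M['F_2]_q := shiftQ q ^+ (q - n).

Section Network.
Variables n1 n2 n3 n4 m : nat.
Local Notation q := (qdim n1 n2 n3 n4 m).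

Definition GS (GA GB : 'M['F_2]_q) : 'M['F_2]_q :=
  chan q n3 *m GA *m chan q n1 + chan q n4 *m GB *m chan q n2.

Definition GM (GA GB : 'M['F_2]_q) : 'M['F_2]_q :=
  chan q n3 *m GA *m chan q m + chan q n4 *m GB *m chan q m.

Definition decodable (GA GB : 'M['F_2]_q) (X : 'M['F_2]_q) : bool :=
  [forall xS : 'cV['F_2]_q, forall xS' : 'cV['F_2]_q,
   forall xM : 'cV['F_2]_q, forall xM' : 'cV['F_2]_q,
     [&& (xS^T <= X)%MS, (xS'^T <= X)%MS &
         GS GA GB *m xS + GM GA GB *m xM == GS GA GB *m xS' + GM GA GB *m xM']
     ==> (xS == xS')].

Definition rate (GA GB : 'M['F_2]_q) : nat :=
  \max_(X : 'M['F_2]_q | decodable GA GB X) \rank X.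

Definition lin_capacity : nat :=
  \max_(G : 'M['F_2]_q * 'M['F_2]_q) rate G.1 G.2.

End Network.

(* The disturbing node M feeds both relays through the same channel Q^(q-m),
   and since m > n2 it can reproduce at D everything S sends along S -> B, as
   well as the top n2 levels of what S sends along S -> A.  Hence for any relay
   maps G_S = G_M Q^(m-n2) + H with H = Q^(q-n3) G_A (Q^(q-n1) - Q^(q-n2)): a
   decodable subspace meets ker H trivially, so its dimension is at most
   rank H <= min(n1, n3).  Conversely, since n4 >= n3 relay B can cancel the
   disturbance exactly (G_B = -Q^(n4-n3) G_A), which leaves G_S = H; taking
   G_A = (Q^(q-n1))^T, H is Q^(q-n3) P (1 - N) with P the projection on the
   first n1 coordinates and N = Q^(n1-n2) nilpotent because n1 > n2, so
   rank H = min(n1, n3) and any complement of ker H is decodable. *)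
From mathcomp Require Import all_boot all_order all_algebra.
From mathcomp Require Import zify.
Set Implicit Arguments. Unset Strict Implicit. Unset Printing Implicit Defensive.
Import GRing.Theory.
Local Open Scope ring_scope.

Section IndicatorSums.
Variables (R : pzSemiRingType) (q c : nat) (g : 'I_q -> R).

Lemma sum_indicator_in (lt_cq : (c < q)%N) :
  \sum_(l < q) ((l : nat) == c)%:R * g l = g (Ordinal lt_cq).
Proof.
rewrite (bigD1 (Ordinal lt_cq)) //= eqxx mul1r big1 ?addr0 // => l nel.
by case: eqP => [lc|]; [move: nel; rewrite -val_eqE /= lc eqxx | rewrite mul0r].
Qed.

Lemma sum_indicator_out (le_qc : (q <= c)%N) :
  \sum_(l < q) ((l : nat) == c)%:R * g l = 0.
Proof.
rewrite big1 // => l _; case: eqP => [lc|]; last by rewrite mul0r.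
by move: (ltn_ord l); rewrite lc ltnNge le_qc.
Qed.

End IndicatorSums.

Section ShiftMatrix.
Variable q : nat.
Local Notation Q := (shiftQ q).

Lemma shiftQX_coef k (i j : 'I_q) : (Q ^+ k) i j = ((i : nat) == j + k)%N%:R.
Proof.
elim: k i j => [|k IHk] i j; first by rewrite expr0 -idmxE mxE addn0.
rewrite exprSr -mulmxE mxE.
under eq_bigr => l _ do rewrite IHk mxE mulrC.
have [lt_jq | le_qj] := ltnP j.+1 q.
  by rewrite (sum_indicator_in _ lt_jq) /= addSn addnS.
rewrite sum_indicator_out //; case: eqP => // ij.
by move: (ltn_ord i); rewrite ij; lia.
Qed.

Lemma shiftQX_eq0 k : (q <= k)%N -> Q ^+ k = 0.
Proof.
move=> le_qk; apply/matrixP => i j; rewrite shiftQX_coef mxE.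
by case: eqP => // ij; move: (ltn_ord i); rewrite ij; lia.
Qed.

Lemma tr_shiftQX_mul k : (Q ^+ k)^T *m Q ^+ k = pid_mx (q - k).
Proof.
apply/matrixP => i j; rewrite !mxE.
under eq_bigr => l _ do rewrite mxE !shiftQX_coef.
have [lt_ikq | le_qik] := ltnP (i + k) q.
  rewrite (sum_indicator_in _ lt_ikq) /= eqn_add2r.
  by rewrite [(i < q - k)%N]ltn_subRL addnC lt_ikq andbT.
by rewrite sum_indicator_out // [(i < q - k)%N]ltn_subRL addnC ltnNge le_qik andbF.
Qed.

Lemma shiftQX_mul_pid k : Q ^+ k *m pid_mx (q - k) = Q ^+ k.
Proof.
apply/matrixP => i j; rewrite !mxE.
under eq_bigr => l _ do rewrite mxE !shiftQX_coef -mulnb natrM mulrCA.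
rewrite (sum_indicator_in _ (ltn_ord j)) /= shiftQX_coef.
case: eqP => ij; last by rewrite mul0r.
have -> : (j < q - k)%N by move: (ltn_ord i); rewrite ij; lia.
by rewrite mulr1.
Qed.

Lemma mxrank_chan n : (n <= q)%N -> (\rank (chan q n) <= n)%N.
Proof.
move=> le_nq; rewrite /chan -shiftQX_mul_pid.
by apply: leq_trans (mxrankM_maxr _ _) _; rewrite rank_pid_mx; lia.
Qed.

Lemma mxrank_chan_pid n r : (n <= q)%N -> (r <= q)%N ->
  \rank (chan q n *m (pid_mx r : 'M_q)) = minn n r.
Proof.
move=> le_nq le_rq; apply/eqP; rewrite eqn_leq leq_min -andbA; apply/and3P; split.
- exact: leq_trans (mxrankM_maxl _ _) (mxrank_chan le_nq).
- by apply: leq_trans (mxrankM_maxr _ _) _; rewrite rank_pid_mx.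
- apply: leq_trans (mxrankM_maxr (chan q n)^T _).
  rewrite mulmxA tr_shiftQX_mul subKn // mul_pid_mx rank_pid_mx ?geq_minl //.
  by lia.
Qed.

Lemma chan_mul_shiftQX a b : (a <= q)%N -> (b <= a)%N ->
  chan q a *m Q ^+ (a - b) = chan q b.
Proof. by move=> le_aq le_ba; rewrite /chan mulmxE -exprD; congr (_ ^+ _); lia. Qed.

End ShiftMatrix.

Section RankKernel.
Variables (F : fieldType) (p r n : nat) (H : 'M[F]_(r, n)).

Lemma mxrank_le_cap_ker (X : 'M[F]_(p, n)) :
  (forall d : 'cV_n, (d^T <= X)%MS -> H *m d = 0 -> d = 0) ->
  (\rank X <= \rank H)%N.
Proof.
move=> capX0.
have capXK : (X :&: kermx H^T)%MS = 0.
  apply/eqP; rewrite -submx0; apply/rV_subP => v.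
  rewrite sub_capmx => /andP [vX /sub_kermxP vK]; rewrite submx0.
  have -> : v = (v^T)^T by rewrite trmxK.
  rewrite (capX0 v^T) ?trmx0 ?trmxK //.
  by rewrite -[H]trmxK -trmx_mul vK trmx0.
have := mxrank_sum_cap X (kermx H^T).
rewrite capXK mxrank0 addn0 mxrank_ker mxrank_tr.
by have := rank_leq_col (X + kermx H^T)%MS; have := rank_leq_col H; lia.
Qed.

Lemma compl_ker_tr_inj (d : 'cV_n) :
  (d^T <= (kermx H^T)^C)%MS -> H *m d = 0 -> d = 0.
Proof.
move=> dC Hd; apply: trmx_inj; apply/eqP.
rewrite trmx0 -submx0 -(capmx_compl (kermx H^T)) capmxC.
by rewrite sub_capmx dC; apply/sub_kermxP; rewrite -trmx_mul Hd trmx0.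
Qed.

Lemma mxrank_compl_ker_tr : \rank (kermx H^T)^C = \rank H.
Proof. by rewrite mxrank_compl mxrank_ker mxrank_tr; have := rank_leq_col H; lia. Qed.

End RankKernel.

Lemma mxrank_mul_1_sub_nilpotent (F : fieldType) (m n k : nat)
    (A : 'M[F]_(m, n)) (N : 'M[F]_n) :
  N ^+ k = 0 -> \rank (A *m (1%:M - N)) = \rank A.
Proof.
move=> Nk0; apply: mxrankMfree; apply/row_freeP; exists (\sum_(i < k) N ^+ i).
by rewrite mulmxE idmxE -opprB mulNr -subrX1 Nk0 sub0r opprK.
Qed.

Section Network.
Variables n1 n2 n3 n4 m : nat.
Local Notation q := (qdim n1 n2 n3 n4 m).
Local Notation Q := (shiftQ q).
Local Notation GS := (@GS n1 n2 n3 n4 m).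
Local Notation GM := (@GM n1 n2 n3 n4 m).
Local Notation decodable := (@decodable n1 n2 n3 n4 m).

Let le_n1q : (n1 <= q)%N. Proof. rewrite /qdim; lia. Qed.
Let le_n3q : (n3 <= q)%N. Proof. rewrite /qdim; lia. Qed.
Let le_n4q : (n4 <= q)%N. Proof. rewrite /qdim; lia. Qed.
Let le_mq : (m <= q)%N. Proof. rewrite /qdim; lia. Qed.

Lemma decodableP (GA GB X : 'M['F_2]_q) :
  reflect (forall xS xS' xM xM' : 'cV_q, (xS^T <= X)%MS -> (xS'^T <= X)%MS ->
             GS GA GB *m xS + GM GA GB *m xM = GS GA GB *m xS' + GM GA GB *m xM' ->
             xS = xS')
          (decodable GA GB X).
Proof.
apply: (iffP idP) => [dec xS xS' xM xM' XS XS' /eqP e | dec].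
  apply/eqP; move/forallP/(_ xS)/forallP/(_ xS')/forallP/(_ xM)/forallP/(_ xM'): dec.
  by move/implyP; apply; rewrite XS XS' e.
do 4![apply/forallP => ?]; apply/implyP => /and3P [XS XS' /eqP e].
by apply/eqP; apply: dec e.
Qed.

Definition unimitable (GA : 'M['F_2]_q) : 'M['F_2]_q :=
  chan q n3 *m GA *m (chan q n1 - chan q n2).

Lemma GS_decomp (GA GB : 'M['F_2]_q) : (n2 <= m)%N ->
  GS GA GB = GM GA GB *m Q ^+ (m - n2) + unimitable GA.
Proof.
move=> le_n2m.
rewrite /GS /GM /unimitable mulmxDl -!mulmxA chan_mul_shiftQX ?le_mq //.
by rewrite !mulmxBr [RHS]addrAC [_ + (_ - _)]addrC subrK.
Qed.

Lemma mxrank_unimitable (GA : 'M['F_2]_q) : (n2 <= n1)%N ->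
  (\rank (unimitable GA) <= minn n1 n3)%N.
Proof.
move=> le_n21; rewrite /unimitable leq_min; apply/andP; split.
  have ->: chan q n1 - chan q n2 = chan q n1 *m (1%:M - Q ^+ (n1 - n2)).
    by rewrite mulmxBr mulmx1 chan_mul_shiftQX ?le_n1q.
  apply: leq_trans (mxrankM_maxr _ _) _; apply: leq_trans (mxrankM_maxl _ _) _.
  exact/mxrank_chan/le_n1q.
do 2!apply: leq_trans (mxrankM_maxl _ _) _.
exact/mxrank_chan/le_n3q.
Qed.

Lemma decodable_rank_le (GA GB X : 'M['F_2]_q) : (n2 <= n1)%N -> (n2 <= m)%N ->
  decodable GA GB X -> (\rank X <= minn n1 n3)%N.
Proof.
move=> le_n21 le_n2m /decodableP dec.
apply: leq_trans (mxrank_unimitable GA le_n21).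
apply: mxrank_le_cap_ker => d Xd Hd.
(* S sending d is indistinguishable from M sending Q^(m-n2) d. *)
apply: (dec d 0 0 (Q ^+ (m - n2) *m d)) => //; first by rewrite trmx0 sub0mx.
by rewrite (GS_decomp _ _ le_n2m) mulmxDl Hd !mulmx0 !addr0 add0r mulmxA.
Qed.

Lemma decodable_compl_ker (GA GB : 'M['F_2]_q) : GM GA GB = 0 ->
  decodable GA GB (kermx (GS GA GB)^T)^C%MS.
Proof.
move=> GM0; apply/decodableP => xS xS' xM xM' XS XS'.
rewrite GM0 !mul0mx !addr0 => /eqP; rewrite -subr_eq0 -mulmxBr => /eqP HxS.
apply/eqP; rewrite -subr_eq0; apply/eqP; apply: compl_ker_tr_inj HxS.
by rewrite linearB /= addmx_sub // -scaleN1r scalemx_sub.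
Qed.

Definition zero_forcing_relays : 'M['F_2]_q * 'M['F_2]_q :=
  let GA := (chan q n1)^T in (GA, - (Q ^+ (n4 - n3) *m GA)).

Lemma zero_forcing_GM : (n3 <= n4)%N ->
  GM zero_forcing_relays.1 zero_forcing_relays.2 = 0.
Proof.
move=> le_n34; rewrite /GM /= mulmxN mulNmx !mulmxA chan_mul_shiftQX ?le_n4q //.
exact: subrr.
Qed.

Lemma zero_forcing_GS_eq : (n3 <= n4)%N -> (n2 <= n1)%N ->
  GS zero_forcing_relays.1 zero_forcing_relays.2
    = chan q n3 *m pid_mx n1 *m (1%:M - Q ^+ (n1 - n2)).
Proof.
move=> le_n34 le_n21.
have P1 : (chan q n1)^T *m chan q n1 = pid_mx n1.
  by rewrite tr_shiftQX_mul subKn ?le_n1q.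
rewrite /GS /= mulmxN mulNmx !mulmxA chan_mul_shiftQX ?le_n4q // -!mulmxA P1.
rewrite -(chan_mul_shiftQX le_n1q le_n21) [(chan q n1)^T *m _]mulmxA P1.
by rewrite mulmxBr mulmx1 mulmxBr.
Qed.

Lemma zero_forcing_GS : (n3 <= n4)%N -> (n2 < n1)%N ->
  \rank (GS zero_forcing_relays.1 zero_forcing_relays.2) = minn n1 n3.
Proof.
move=> le_n34 lt_n21; rewrite zero_forcing_GS_eq ?(ltnW lt_n21) //.
have Nq0 : Q ^+ (n1 - n2) ^+ q = 0.
  by rewrite -exprM shiftQX_eq0 // leq_pmull ?subn_gt0.
by rewrite (mxrank_mul_1_sub_nilpotent _ Nq0) (mxrank_chan_pid le_n3q le_n1q) minnC.
Qed.

End Network.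

Theorem mainTheorem7 (n1 n2 n3 n4 m : nat) :
  (n2 < n1)%N -> (n3 <= n4)%N -> (n2 < m)%N ->
  lin_capacity n1 n2 n3 n4 m = minn n1 n3.
Proof.
move=> lt_n21 le_n34 lt_n2m; apply/eqP; rewrite eqn_leq; apply/andP; split.
  apply/bigmax_leqP => G _; apply/bigmax_leqP => X.
  exact: decodable_rank_le (ltnW lt_n21) (ltnW lt_n2m).
set G := zero_forcing_relays n1 n2 n3 n4 m.
apply: leq_trans (leq_bigmax G).
rewrite -(zero_forcing_GS m le_n34 lt_n21) -mxrank_compl_ker_tr.
exact/leq_bigmax_cond/decodable_compl_ker/zero_forcing_GM.
Qed.
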